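(* There exist a financial system $S$ in the base model (all contracts of the same priority) and distinct banks $u_1,u_2,v_1,v_2$, with a debt contract of positive weight from $u_1$ to $v_1$ and one from $u_2$ to $v_2$, such that the following holds. For $(s_1,s_2)\in\{C,D\}^2$ let $S_{s_1s_2}$ be the system obtained from $S$ by deleting the debt contract from $u_i$ to $v_i$ for exactly those $i$ with $s_i=C$. Then each $S_{s_1s_2}$ has exactly one solution, and the payoffs $(q_{v_1},q_{v_2})$ at that solution are $(3,3)$ for $CC$, $(1,1)$ for $DD$, $(0,1)$ for $CD$, and $(1,0)$ for $DC$. In particular, in the two-player game where $v_i$ chooses $s_i$ and receives its payoff in $S_{s_1s_2}$, both $CC$ and $DD$ are pure Nash equilibria, and $CC$ gives each player strictly more than any other profile.
   Context: A financial system with payment priorities consists of: a finite set $V$ of banks; external assets $e_v\ge 0$ for each $v\in V$; a number $P\ge 1$ of priority levels; and a finite set of contracts, each of which is either a debt contract from a debtor $u$ to a creditor $v\neq u$ with weight $c>0$, or a credit default swap (CDS) from a debtor $u$ to a creditor $v\neq u$ in reference to a bank $w\notin\{u,v\}$ (the reference entity) with weight $c>0$. Every contract has a priority in $\{1,\dots,P\}$ (1 is the highest priority). It is assumed that every bank that is the reference entity of some CDS is the debtor of at least one debt contract of positive weight. Given a recovery rate vector $r\in[0,1]^V$: the liability of a contract $k$ is $l_k(r)=c$ if $k$ is a debt of weight $c$, and $l_k(r)=c\,(1-r_w)$ if $k$ is a CDS of weight $c$ in reference to $w$. For a bank $v$, $l_v(r)$ is the sum of the liabilities of the contracts with debtor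 $v$; $l_v^{(\rho)}(r)$ is the sum of the liabilities of contracts with debtor $v$ and priority $\rho$; and $l_v^{(\le\rho)}(r)=\sum_{i=1}^{\rho}l_v^{(i)}(r)$ (with $l_v^{(\le 0)}=0$). The payment on a contract $k$ with debtor $v$ and priority $\rho$ is $p_k(r)=l_k(r)\cdot\min\{1,\max\{0,(r_v l_v(r)-l_v^{(\le\rho-1)}(r))/l_v^{(\rho)}(r)\}\}$ (and $p_k(r)=0$ if $l_v^{(\rho)}(r)=0$). The assets of $v$ are $a_v(r)=e_v+\sum_k p_k(r)$, summing over contracts $k$ with creditor $v$. A vector $r\in[0,1]^V$ is a solution (clearing vector) if for every $v\in V$: $r_v=1$ when $a_v(r)\ge l_v(r)$, and $r_v=a_v(r)/l_v(r)$ when $a_v(r)<l_v(r)$. The payoff of $v$ is $q_v(r)=\max\{a_v(r)-l_v(r),0\}$. When $P=1$, payments reduce to $p_k(r)=r_v\,l_k(r)$ (principle of proportionality); this is called the base model. *)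

From Stdlib Require Import Reals List.
Import ListNotations.
Open Scope R_scope.

Inductive ctype : Type :=
  | Debt
  | CDS (w : nat).           (* credit default swap in reference to bank w *)

Record contract : Type := mkContract {
  c_debtor   : nat;
  c_creditor : nat;
  c_type     : ctype;
  c_weight   : R;
  c_prio     : nat   (* priority in 1..nprio, 1 = highest *)
}.

Record system : Type := mkSystem {
  nbanks    : nat;
  ext       : nat -> R;
  nprio     : nat;
  contracts : list contract
}.

Definition is_bank (S : system) (v : nat) : Prop := (v < nbanks S)%nat.

Definition wf_contract (S : system) (k : contract) : Prop :=
  is_bank S (c_debtor k) /\ is_bank S (c_creditor k) /\
  c_debtor k <> c_creditor k /\ 0 < c_weight k /\
  (1 <= c_prio k <= nprio S)%nat /\
  match c_type k with
  | Debt => True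
  | CDS w =>
      is_bank S w /\ w <> c_debtor k /\ w <> c_creditor k /\
      exists k', In k' (contracts S) /\ c_type k' = Debt /\
                 c_debtor k' = w /\ 0 < c_weight k'
  end.

Definition wf_system (S : system) : Prop :=
  (1 <= nprio S)%nat /\
  (forall v, is_bank S v -> 0 <= ext S v) /\
  (forall k, In k (contracts S) -> wf_contract S k).

Definition base_model (S : system) : Prop := nprio S = 1%nat.

Definition liab (r : nat -> R) (k : contract) : R :=
  match c_type k with
  | Debt => c_weight k
  | CDS w => c_weight k * (1 - r w)
  end.

Definition sumR (l : list R) : R := fold_right Rplus 0 l.

Definition liab_bank (S : system) (r : nat -> R) (v : nat) : R :=
  sumR (map (liab r)
    (filter (fun k => Nat.eqb (c_debtor k) v) (contracts S))).

Definition liab_prio (S : system) (r : nat -> R) (v rho : nat) : R :=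
  sumR (map (liab r)
    (filter (fun k => andb (Nat.eqb (c_debtor k) v) (Nat.eqb (c_prio k) rho))
       (contracts S))).

Definition liab_upto (S : system) (r : nat -> R) (v rho : nat) : R :=
  sumR (map (liab_prio S r v) (seq 1 rho)).

Definition payment (S : system) (r : nat -> R) (k : contract) : R :=
  let v := c_debtor k in
  let rho := c_prio k in
  let lrho := liab_prio S r v rho in
  if Req_EM_T lrho 0 then 0
  else liab r k *
       Rmin 1 (Rmax 0 ((r v * liab_bank S r v - liab_upto S r v (rho - 1))
                       / lrho)).

Definition assets (S : system) (r : nat -> R) (v : nat) : R :=
  ext S v + sumR (map (payment S r)
    (filter (fun k => Nat.eqb (c_creditor k) v) (contracts S))).

Definition is_solution (S : system) (r : nat -> R) : Prop :=
  forall v, is_bank S v ->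
    0 <= r v <= 1 /\
    (assets S r v >= liab_bank S r v -> r v = 1) /\
    (assets S r v < liab_bank S r v -> r v = assets S r v / liab_bank S r v).

Definition payoff (S : system) (r : nat -> R) (v : nat) : R :=
  Rmax (assets S r v - liab_bank S r v) 0.

Definition unique_solution_payoffs (S : system) (v1 v2 : nat) (x1 x2 : R)
  : Prop :=
  exists r, is_solution S r /\
    (forall r', is_solution S r' -> forall v, is_bank S v -> r' v = r v) /\
    payoff S r v1 = x1 /\ payoff S r v2 = x2.

Fixpoint filteri_aux {A : Type} (f : nat -> bool) (i : nat) (l : list A)
  : list A :=
  match l with
  | [] => []
  | x :: l' => if f i then x :: filteri_aux f (S i) l'
               else filteri_aux f (S i) l'
  end.

Definition delete_contracts (S : system) (k1 k2 : nat) (d1 d2 : bool)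
  : system :=
  mkSystem (nbanks S) (ext S) (nprio S)
    (filteri_aux (fun i => negb ((d1 && Nat.eqb i k1) || (d2 && Nat.eqb i k2)))%bool
       0 (contracts S)).

(* u_1 and u_2 each hold 2 and owe 2 to the hub w plus 2 to their creditor
   v_i, so u_i is solvent exactly when v_i cancels its claim (strategy C) and
   pays at rate 1/2 otherwise.  The hub w owes 3 and defaults (rate 2/3) only
   when both u_i default.  Each v_i holds 3, has sold CDSs of weight 6 on both
   u_1 and u_2, and holds a CDS of weight 9 on w written by the well funded x.
   When both defect, the insurance on w just outweighs the CDS losses;
   cooperation removes those losses altogether; a lone cooperator bears the
   CDS loss on the defector without any insurance, because w stays solvent.
   The balance sheet of each bank in the order u_1, u_2, w, x, v_1, v_2, sink
   depends only on the rates of earlier banks, so the clearing vector is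
   determined bank by bank and is unique. *)

From Stdlib Require Import Reals List Lra Lia.
Import ListNotations.
Open Scope R_scope.

Lemma sumR_nonneg {A : Type} (f : A -> R) (l : list A) :
  (forall x, In x l -> 0 <= f x) -> 0 <= sumR (map f l).
Proof.
  induction l as [|a l IH]; intros Hf; simpl; [lra|].
  assert (0 <= f a) by (apply Hf; left; reflexivity).
  assert (0 <= sumR (map f l)) by (apply IH; intros x Hx; apply Hf; right; exact Hx).
  lra.
Qed.

Lemma term_le_sumR {A : Type} (f : A -> R) (l : list A) (x : A) :
  In x l -> (forall y, In y l -> 0 <= f y) -> f x <= sumR (map f l).
Proof.
  induction l as [|a l IH]; simpl; [tauto|].
  intros Hx Hf.
  assert (0 <= f a) by (apply Hf; left; reflexivity).
  assert (0 <= sumR (map f l)) by (apply sumR_nonneg; intros y Hy; apply Hf; right; exact Hy).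
  destruct Hx as [<-|Hx]; [lra|].
  assert (f x <= sumR (map f l)) by (apply IH; auto).
  lra.
Qed.

Definition unit_rates (S : system) (r : nat -> R) : Prop :=
  forall v, is_bank S v -> 0 <= r v <= 1.

Lemma liab_nonneg S r k :
  wf_system S -> unit_rates S r -> In k (contracts S) -> 0 <= liab r k.
Proof.
  intros [_ [_ Hwf]] Hunit Hk.
  destruct (Hwf k Hk) as [_ [_ [_ [Hw [_ Hty]]]]].
  unfold liab. destruct (c_type k) as [|w]; [lra|].
  destruct Hty as [Hbank _]. specialize (Hunit w Hbank).
  apply Rmult_le_pos; lra.
Qed.

Lemma base_prio S k :
  wf_system S -> base_model S -> In k (contracts S) -> c_prio k = 1%nat.
Proof.
  intros [_ [_ Hwf]] Hbase Hk.
  destruct (Hwf k Hk) as [_ [_ [_ [_ [Hprio _]]]]].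
  unfold base_model in Hbase. lia.
Qed.

Lemma payment_base S r k :
  wf_system S -> base_model S -> unit_rates S r -> In k (contracts S) ->
  payment S r k = liab r k * r (c_debtor k).
Proof.
  intros Hwf Hbase Hunit Hk.
  set (v := c_debtor k).
  assert (Hv : 0 <= r v <= 1).
  { apply Hunit. destruct Hwf as [_ [_ Hwf]]. apply (Hwf k Hk). }
  assert (Hprio : liab_prio S r v 1 = liab_bank S r v).
  { unfold liab_prio, liab_bank. f_equal. f_equal. apply filter_ext_in.
    intros k' Hk'. rewrite (base_prio S k' Hwf Hbase Hk'), Nat.eqb_refl.
    apply Bool.andb_true_r. }
  assert (Hle : liab r k <= liab_bank S r v).
  { unfold liab_bank. apply term_le_sumR.
    - apply filter_In. split; [exact Hk | apply Nat.eqb_refl].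
    - intros y Hy. apply filter_In in Hy. apply (liab_nonneg S); tauto. }
  pose proof (liab_nonneg S r k Hwf Hunit Hk).
  unfold payment. fold v. rewrite (base_prio S k Hwf Hbase Hk), Hprio.
  change (liab_upto S r v (1 - 1)) with 0.
  destruct (Req_EM_T (liab_bank S r v) 0) as [Hz|Hz].
  - replace (liab r k) with 0 by lra. ring.
  - replace ((r v * liab_bank S r v - 0) / liab_bank S r v) with (r v) by (field; exact Hz).
    rewrite Rmax_right, Rmin_right by lra. reflexivity.
Qed.

Lemma assets_base S r v :
  wf_system S -> base_model S -> unit_rates S r ->
  assets S r v = ext S v + sumR (map (fun k => liab r k * r (c_debtor k))
    (filter (fun k => Nat.eqb (c_creditor k) v) (contracts S))).
Proof.
  intros Hwf Hbase Hunit. unfold assets. f_equal. f_equal. apply map_ext_in.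
  intros k Hk. apply filter_In in Hk. apply payment_base; tauto.
Qed.

Definition clearing_rate (a l : R) : R := if Rle_dec l a then 1 else a / l.

Lemma clearing_rate_full a l : l <= a -> clearing_rate a l = 1.
Proof. intros H. unfold clearing_rate. destruct (Rle_dec l a); [reflexivity | contradiction]. Qed.

Lemma clearing_rate_partial a l : a < l -> clearing_rate a l = a / l.
Proof. intros H. unfold clearing_rate. destruct (Rle_dec l a); [lra | reflexivity]. Qed.

Lemma is_solutionE S r :
  is_solution S r <->
  unit_rates S r /\
  forall v, is_bank S v -> r v = clearing_rate (assets S r v) (liab_bank S r v).
Proof.
  split.
  - intros Hsol. split; [intros v Hv; apply (Hsol v Hv)|].
    intros v Hv. destruct (Hsol v Hv) as [_ [Hfull Hpart]].
    destruct (Rle_dec (liab_bank S r v) (assets S r v)) as [Hle|Hlt].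
    + rewrite clearing_rate_full by exact Hle. apply Hfull. lra.
    + rewrite clearing_rate_partial by lra. apply Hpart. lra.
  - intros [Hunit Hfix] v Hv. split; [apply Hunit, Hv|].
    rewrite (Hfix v Hv). split; intros H.
    + apply clearing_rate_full. lra.
    + apply clearing_rate_partial. exact H.
Qed.

(* Banks: u_1 = 0, u_2 = 1, v_1 = 2, v_2 = 3, w = 4, x = 5, and a sink 6. *)
Definition pd_core : list contract :=
  [mkContract 0 4 Debt 2 1; mkContract 1 4 Debt 2 1;
   mkContract 4 6 Debt 3 1;
   mkContract 5 2 (CDS 4) 9 1; mkContract 5 3 (CDS 4) 9 1;
   mkContract 2 6 (CDS 0) 6 1; mkContract 2 6 (CDS 1) 6 1;
   mkContract 3 6 (CDS 1) 6 1; mkContract 3 6 (CDS 0) 6 1].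

Definition pd_ext (v : nat) : R :=
  match v with 0%nat | 1%nat => 2 | 2%nat | 3%nat => 3 | 5%nat => 20 | _ => 0 end.

Definition pd_system : system :=
  mkSystem 7 pd_ext 1 (mkContract 0 2 Debt 2 1 :: mkContract 1 3 Debt 2 1 :: pd_core).

Definition pd_game (d1 d2 : bool) : system := delete_contracts pd_system 0 1 d1 d2.

Tactic Notation "pd_simpl" := cbn [pd_game delete_contracts pd_system pd_core pd_ext
  contracts ext nbanks nprio filteri_aux filter map sumR fold_right In liab
  c_type c_weight c_debtor c_creditor c_prio Nat.eqb negb andb orb].
Tactic Notation "pd_simpl" "in" hyp(H) := cbn [pd_game delete_contracts pd_system pd_core pd_ext
  contracts ext nbanks nprio filteri_aux filter map sumR fold_right In liab
  c_type c_weight c_debtor c_creditor c_prio Nat.eqb negb andb orb] in H.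

Ltac reference_debt k := exists k; solve [pd_simpl; repeat split; auto 20; lra].

Lemma pd_game_wf d1 d2 : wf_system (pd_game d1 d2).
Proof.
  split; [cbn; lia|]. split.
  - intros v Hv. unfold is_bank in Hv. cbn in Hv.
    destruct v as [|[|[|[|[|[|[|v]]]]]]]; cbn; lra || lia.
  - intros k Hk. unfold wf_contract, is_bank.
    destruct d1, d2; pd_simpl; pd_simpl in Hk;
      repeat destruct Hk as [<-|Hk]; try contradiction; pd_simpl;
      repeat split; try lia; try lra;
      first [ reference_debt (mkContract 0 4 Debt 2 1)
            | reference_debt (mkContract 1 4 Debt 2 1)
            | reference_debt (mkContract 4 6 Debt 3 1) ].
Qed.

Definition kept_weight (deleted : bool) (c : R) : R := if deleted then 0 else c.

Definition pd_liab (d1 d2 : bool) (r : nat -> R) (v : nat) : R :=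
  match v with
  | 0%nat => kept_weight d1 2 + 2
  | 1%nat => kept_weight d2 2 + 2
  | 2%nat | 3%nat => 6 * (1 - r 0%nat) + 6 * (1 - r 1%nat)
  | 4%nat => 3
  | 5%nat => 18 * (1 - r 4%nat)
  | _ => 0
  end.

Definition pd_assets (d1 d2 : bool) (r : nat -> R) (v : nat) : R :=
  match v with
  | 0%nat | 1%nat => 2
  | 2%nat => 3 + kept_weight d1 2 * r 0%nat + 9 * (1 - r 4%nat) * r 5%nat
  | 3%nat => 3 + kept_weight d2 2 * r 1%nat + 9 * (1 - r 4%nat) * r 5%nat
  | 4%nat => 2 * r 0%nat + 2 * r 1%nat
  | 5%nat => 20
  | 6%nat => 3 * r 4%nat + 6 * ((1 - r 0%nat) + (1 - r 1%nat)) * (r 2%nat + r 3%nat)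
  | _ => 0
  end.

Lemma pd_liab_bank d1 d2 r v : liab_bank (pd_game d1 d2) r v = pd_liab d1 d2 r v.
Proof.
  unfold liab_bank.
  destruct d1, d2; pd_simpl; destruct v as [|[|[|[|[|[|[|v]]]]]]]; cbn; ring.
Qed.

Lemma pd_assets_base d1 d2 r v :
  unit_rates (pd_game d1 d2) r -> assets (pd_game d1 d2) r v = pd_assets d1 d2 r v.
Proof.
  intros Hunit. rewrite (assets_base _ _ _ (pd_game_wf d1 d2) eq_refl Hunit).
  destruct d1, d2; pd_simpl; destruct v as [|[|[|[|[|[|[|v]]]]]]]; cbn; ring.
Qed.

Definition u_rate (d : bool) : R := if d then 1 else 1 / 2.

Definition w_rate (d1 d2 : bool) : R := if (d1 || d2)%bool then 1 else 2 / 3.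

Definition pd_rates (d1 d2 : bool) (v : nat) : R :=
  match v with
  | 0%nat => u_rate d1
  | 1%nat => u_rate d2
  | 4%nat => w_rate d1 d2
  | _ => 1
  end.

Lemma u_rate_bounds d : 0 <= u_rate d <= 1.
Proof. destruct d; cbn; lra. Qed.

Lemma w_rate_bounds d1 d2 : 0 <= w_rate d1 d2 <= 1.
Proof. destruct d1, d2; cbn; lra. Qed.

Lemma w_rate_comm d1 d2 : w_rate d1 d2 = w_rate d2 d1.
Proof. unfold w_rate. rewrite Bool.orb_comm. reflexivity. Qed.

Lemma u_rate_clearing d : clearing_rate 2 (kept_weight d 2 + 2) = u_rate d.
Proof.
  destruct d; cbn.
  - apply clearing_rate_full. lra.
  - rewrite clearing_rate_partial by lra. field.
Qed.

Lemma w_rate_clearing d1 d2 :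
  clearing_rate (2 * u_rate d1 + 2 * u_rate d2) 3 = w_rate d1 d2.
Proof.
  destruct d1, d2; cbn;
    first [ apply clearing_rate_full; lra | rewrite clearing_rate_partial by lra; field ].
Qed.

Lemma v_solvent d d' :
  6 * (1 - u_rate d) + 6 * (1 - u_rate d') <= 3 + kept_weight d 2 * u_rate d + 9 * (1 - w_rate d d').
Proof. destruct d, d'; cbn; lra. Qed.

Lemma pd_rates_unit d1 d2 : unit_rates (pd_game d1 d2) (pd_rates d1 d2).
Proof.
  intros v _. pose proof (u_rate_bounds d1). pose proof (u_rate_bounds d2).
  pose proof (w_rate_bounds d1 d2).
  destruct v as [|[|[|[|[|v]]]]]; cbn; lra.
Qed.

Lemma pd_rates_solution d1 d2 : is_solution (pd_game d1 d2) (pd_rates d1 d2).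
Proof.
  pose proof (pd_rates_unit d1 d2) as Hunit.
  apply is_solutionE. split; [exact Hunit|].
  intros v Hv. rewrite pd_assets_base, pd_liab_bank by exact Hunit.
  pose proof (u_rate_bounds d1). pose proof (u_rate_bounds d2).
  pose proof (w_rate_bounds d1 d2).
  unfold is_bank in Hv. cbn in Hv.
  destruct v as [|[|[|[|[|[|[|v]]]]]]]; cbn [pd_assets pd_liab pd_rates]; try lia.
  - symmetry. apply u_rate_clearing.
  - symmetry. apply u_rate_clearing.
  - symmetry. apply clearing_rate_full. pose proof (v_solvent d1 d2). lra.
  - symmetry. apply clearing_rate_full. pose proof (v_solvent d2 d1).
    rewrite w_rate_comm. lra.
  - symmetry. apply w_rate_clearing.
  - symmetry. apply clearing_rate_full. lra.
  - symmetry. apply clearing_rate_full. lra.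
Qed.

Lemma pd_solution_unique d1 d2 r :
  is_solution (pd_game d1 d2) r ->
  forall v, is_bank (pd_game d1 d2) v -> r v = pd_rates d1 d2 v.
Proof.
  intros Hsol. apply is_solutionE in Hsol as [Hunit Hfix].
  assert (Hr : forall v, (v < 7)%nat ->
            r v = clearing_rate (pd_assets d1 d2 r v) (pd_liab d1 d2 r v)).
  { intros v Hv. rewrite <- pd_assets_base, <- pd_liab_bank by exact Hunit.
    apply Hfix. exact Hv. }
  assert (Hu1 : r 0%nat = u_rate d1)
    by (rewrite Hr by lia; apply u_rate_clearing).
  assert (Hu2 : r 1%nat = u_rate d2)
    by (rewrite Hr by lia; apply u_rate_clearing).
  assert (Hw : r 4%nat = w_rate d1 d2)
    by (rewrite Hr by lia; cbn [pd_assets pd_liab]; rewrite Hu1, Hu2; apply w_rate_clearing).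
  assert (Hx : r 5%nat = 1).
  { rewrite Hr by lia. apply clearing_rate_full. cbn [pd_assets pd_liab].
    rewrite Hw. pose proof (w_rate_bounds d1 d2). lra. }
  assert (Hv1 : r 2%nat = 1).
  { rewrite Hr by lia. apply clearing_rate_full. cbn [pd_assets pd_liab].
    rewrite Hu1, Hu2, Hw, Hx. pose proof (v_solvent d1 d2). lra. }
  assert (Hv2 : r 3%nat = 1).
  { rewrite Hr by lia. apply clearing_rate_full. cbn [pd_assets pd_liab].
    rewrite Hu1, Hu2, Hw, Hx, w_rate_comm. pose proof (v_solvent d2 d1). lra. }
  assert (Hsink : r 6%nat = 1).
  { rewrite Hr by lia. apply clearing_rate_full. cbn [pd_assets pd_liab].
    rewrite Hu1, Hu2, Hw, Hv1, Hv2.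
    pose proof (u_rate_bounds d1). pose proof (u_rate_bounds d2).
    pose proof (w_rate_bounds d1 d2). lra. }
  intros v Hv. unfold is_bank in Hv. cbn in Hv.
  destruct v as [|[|[|[|[|[|[|v]]]]]]]; cbn [pd_rates]; assumption || lia.
Qed.

Definition pd_payoff (own other : bool) : R :=
  if own then (if other then 3 else 0) else 1.

Lemma pd_payoff_v1 d1 d2 :
  payoff (pd_game d1 d2) (pd_rates d1 d2) 2 = pd_payoff d1 d2.
Proof.
  unfold payoff. rewrite pd_assets_base, pd_liab_bank by apply pd_rates_unit.
  unfold Rmax. destruct d1, d2; cbn; destruct Rle_dec; lra.
Qed.

Lemma pd_payoff_v2 d1 d2 :
  payoff (pd_game d1 d2) (pd_rates d1 d2) 3 = pd_payoff d2 d1.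
Proof.
  unfold payoff. rewrite pd_assets_base, pd_liab_bank by apply pd_rates_unit.
  unfold Rmax. destruct d1, d2; cbn; destruct Rle_dec; lra.
Qed.

Lemma pd_unique_solution_payoffs d1 d2 :
  unique_solution_payoffs (pd_game d1 d2) 2 3 (pd_payoff d1 d2) (pd_payoff d2 d1).
Proof.
  exists (pd_rates d1 d2). split; [apply pd_rates_solution|].
  split; [apply pd_solution_unique|].
  split; [apply pd_payoff_v1 | apply pd_payoff_v2].
Qed.

Theorem mainTheorem11 :
  exists (S : system) (u1 u2 v1 v2 : nat) (k1 k2 : nat) (c1 c2 : R),
    wf_system S /\ base_model S /\
    is_bank S u1 /\ is_bank S u2 /\ is_bank S v1 /\ is_bank S v2 /\
    u1 <> u2 /\ u1 <> v1 /\ u1 <> v2 /\ u2 <> v1 /\ u2 <> v2 /\ v1 <> v2 /\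
    k1 <> k2 /\
    nth_error (contracts S) k1 = Some (mkContract u1 v1 Debt c1 1%nat) /\ 0 < c1 /\
    nth_error (contracts S) k2 = Some (mkContract u2 v2 Debt c2 1%nat) /\ 0 < c2 /\
    (forall d1 d2 : bool, wf_system (delete_contracts S k1 k2 d1 d2)) /\
    unique_solution_payoffs (delete_contracts S k1 k2 true  true ) v1 v2 3 3 /\
    unique_solution_payoffs (delete_contracts S k1 k2 false false) v1 v2 1 1 /\
    unique_solution_payoffs (delete_contracts S k1 k2 true  false) v1 v2 0 1 /\
    unique_solution_payoffs (delete_contracts S k1 k2 false true ) v1 v2 1 0.
Proof.
  exists pd_system, 0%nat, 1%nat, 2%nat, 3%nat, 0%nat, 1%nat, 2, 2.
  (* Deleting nothing gives back pd_system itself. *)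
  split; [exact (pd_game_wf false false)|].
  split; [reflexivity|].
  do 4 (split; [unfold is_bank; cbn; lia|]).
  do 7 (split; [lia|]).
  do 2 (split; [reflexivity|]; split; [lra|]).
  split; [exact pd_game_wf|].
  split; [exact (pd_unique_solution_payoffs true true)|].
  split; [exact (pd_unique_solution_payoffs false false)|].
  split; [exact (pd_unique_solution_payoffs true false)|].
  exact (pd_unique_solution_payoffs false true).
Qed.
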